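(* Let $m<n$ be natural numbers, $Y=[\omega]^n$, $\mathcal{I}$ the ideal of thin subsets of $[\omega]^n$, and $\psi=\lambda^{(n-m)}\partial^{(n-m)}$. Suppose $S\subseteq[\omega]^n$ is not $(<\!\aleph_0)$-near-closed, and let $p,q\in\beta[\omega]^n$ be such that $p$ $\psi$-intertwines $q$ over $S$ modulo $\mathcal{I}$. Then $\pi^n_m(p)=\pi^n_m(q)$.
   Context: $T\subseteq[\omega]^k$ is thick if for every $j\geq k$ there is $s\in[\omega]^j$ with $[s]^k\subseteq T$; thin otherwise (thin sets form an ideal). For $T\subseteq[\omega]^n$, $\partial^{(n-m)}T=\{s\in[\omega]^m:\exists t\in[\omega]^{n-m}\ (s\cup t\in T)\}$, and for $A\subseteq[\omega]^m$, $\lambda^{(n-m)}A=\{s\in[\omega]^n:[s]^m\subseteq A\}$. For a thick ultrafilter $p$ on $[\omega]^n$, $\pi^n_m(p)$ is the unique thick ultrafilter $q'$ on $[\omega]^m$ such that $\{a\in[\omega]^n:[a]^m\subseteq R\}\in p$ for every $R\in q'$. Write $R\subseteq_{\mathcal{I}}T$ if $R\setminus T\in\mathcal{I}$. A set $T$ is closed if $\psi(T)=T$; near-closed if $T\,\Delta\,T'\in\mathcal{I}$ for some closed $T'$; $(<\!\aleph_0)$-near-closed if $T\,\Delta\,(T_0\cup\dots\cup T_{k-1})\in\mathcal{I}$ for some $k<\omega$ and closed $T_i$. For $S$ not $(<\!\aleph_0)$-near-closed, $p$ $\psi$-intertwines $q$ over $S$ modulo $\mathcal{I}$ if: (1) $S\setminus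 T\in p$ for every near-closed $T$ with $T\subseteq_{\mathcal{I}}S$; (2) $\psi(T)\setminus S\in q$ for every $T\in p$ with $T\subseteq S$; (3) $p$ and $q$ contain the complement of every member of $\mathcal{I}$. *)

From mathcomp Require Import all_boot finmap.
Set Implicit Arguments. Unset Strict Implicit. Unset Printing Implicit Defensive.
Local Open Scope fset_scope.

(* A subset of [omega]^<omega is a predicate on finite sets of naturals;
   a family of such subsets (e.g. an ultrafilter) is a predicate on those. *)
Definition fam := {fset nat} -> Prop.
Definition fam2 := fam -> Prop.

Definition Ysub (k : nat) : fam := fun s => #|` s| = k.

Definition incl (A B : fam) : Prop := forall s, A s -> B s.
Definition fdiff (A B : fam) : fam := fun s => A s /\ ~ B s.
Definition finter (A B : fam) : fam := fun s => A s /\ B s.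
Definition fsymdiff (A B : fam) : fam := fun s => (A s /\ ~ B s) \/ (B s /\ ~ A s).
Definition fempty : fam := fun _ => False.

Definition thick (k : nat) (T : fam) : Prop :=
  forall j, k <= j -> exists s : {fset nat}, #|` s| = j /\
    (forall t : {fset nat}, fsubset t s -> #|` t| = k -> T t).

Definition inI (n : nat) (A : fam) : Prop := incl A (Ysub n) /\ ~ thick n A.

Definition subI (n : nat) (R T : fam) : Prop := inI n (fdiff R T).

Definition shadow (n m : nat) (T : fam) : fam :=
  fun s => #|` s| = m /\ exists t : {fset nat}, #|` t| = n - m /\ T (s `|` t).

Definition lift (n m : nat) (A : fam) : fam :=
  fun s => #|` s| = n /\ (forall t : {fset nat}, fsubset t s -> #|` t| = m -> A t).

Definition psi (n m : nat) (T : fam) : fam := lift n m (shadow n m T).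

Definition closed_set (n m : nat) (T : fam) : Prop := psi n m T = T.

Definition near_closed (n m : nat) (T : fam) : Prop :=
  exists T', closed_set n m T' /\ inI n (fsymdiff T T').

Definition fin_near_closed (n m : nat) (T : fam) : Prop :=
  exists (k : nat) (Ts : nat -> fam),
    (forall i, i < k -> closed_set n m (Ts i)) /\
    inI n (fsymdiff T (fun s => exists i, i < k /\ Ts i s)).

Definition ultrafilter_on (Y : fam) (p : fam2) : Prop :=
  (forall A, p A -> incl A Y) /\
  [/\ p Y,
      ~ p fempty,
      (forall A B, p A -> p B -> p (finter A B)),
      (forall A B, p A -> incl A B -> incl B Y -> p B) &
      (forall A, incl A Y -> p A \/ p (fdiff Y A))].

Definition thick_ultrafilter (k : nat) (p : fam2) : Prop :=
  ultrafilter_on (Ysub k) p /\ forall A, p A -> thick k A.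

(* q' is a thick ultrafilter on [omega]^m satisfying the defining property
   of pi^n_m(p). *)
Definition is_proj (n m : nat) (p q' : fam2) : Prop :=
  thick_ultrafilter m q' /\
  forall R, q' R -> p (fun a => #|` a| = n /\
                        forall t : {fset nat}, fsubset t a -> #|` t| = m -> R t).

Definition is_pi (n m : nat) (p q' : fam2) : Prop :=
  is_proj n m p q' /\ forall q'', is_proj n m p q'' -> q'' = q'.

Definition intertwines (n m : nat) (S : fam) (p q : fam2) : Prop :=
  [/\ ~ fin_near_closed n m S,
      (forall T, near_closed n m T -> subI n T S -> p (fdiff S T)),
      (forall T, p T -> incl T S -> q (fdiff (psi n m T) S)) &
      (forall A, inI n A -> p (fdiff (Ysub n) A) /\ q (fdiff (Ysub n) A))].

From Pilot Require Import Defs.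
From mathcomp Require Import all_boot finmap.
From Stdlib Require Import Classical FunctionalExtensionality PropExtensionality.
Set Implicit Arguments. Unset Strict Implicit. Unset Printing Implicit Defensive.
Local Open Scope fset_scope.

(** Every projection [q'] of [p] is contained in [{R | lift n m R \in p}],
    a family that never contains a set together with its complement, so by
    maximality [q'] equals it; conversely this family is an ultrafilter
    because, by the finite Ramsey theorem, the sets on which neither [lift R]
    nor [lift] of the complement of [R] holds are thin.  Condition (1) with
    [T] empty puts [S] in [p], hence [S \cap lift R] in [p] whenever
    [lift R] is, and then [psi (S \cap lift R)], which is still contained in
    [lift R], lies in [q]; so [q] projects to the same ultrafilter. *)

Lemma exists_fsubset_between (t s : {fset nat}) k :
  t `<=` s -> #|` t| <= k <= #|` s| ->
  exists a, [/\ t `<=` a, a `<=` s & #|` a| = k].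
Proof.
move=> ts; elim: k => [|k IHk] /andP[tk ks].
  by exists t; split=> //; apply/eqP; rewrite -leqn0.
have [tk1 | tk1] := eqVneq #|` t| k.+1; first by exists t.
have [a [ta a_s ca]] : exists a, [/\ t `<=` a, a `<=` s & #|` a| = k].
  by apply: IHk; rewrite -ltnS ltn_neqAle tk1 tk ltnW.
have /fset0Pn[x] : s `\` a != fset0 by rewrite -cardfs_gt0 cardfsDS // ca subn_gt0.
rewrite in_fsetD => /andP[xa xs].
exists (x |` a); split; first exact: fsubset_trans ta (fsubsetU1 _ _).
  by rewrite fsubUset fsub1set xs.
by rewrite cardfsU1 xa ca.
Qed.

Lemma exists_fsubset_card (s : {fset nat}) k :
  k <= #|` s| -> exists2 a, a `<=` s & #|` a| = k.
Proof.
move=> ks; have [|a [_ a_s ca]] := @exists_fsubset_between fset0 s k (fsub0set _).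
  by rewrite cardfs0.
by exists a.
Qed.

(* Qualified, because fintype's [lift] shadows the one of [Defs]. *)
Definition hom_subset m (P : fam) k (s : {fset nat}) :=
  exists2 a, a `<=` s & Defs.lift k m P a.

Lemma hom_subset_mono m P k (a s : {fset nat}) :
  a `<=` s -> hom_subset m P k a -> hom_subset m P k s.
Proof. by move=> a_s [b ba hb]; exists b => //; apply: fsubset_trans ba a_s. Qed.

Lemma hom_subset0 m P s : hom_subset m.+1 P 0 s.
Proof.
exists fset0; first exact: fsub0set.
split=> [|t /fsubset_leq_card]; first by rewrite cardfs0.
by rewrite cardfs0 leqn0 => /eqP ->.
Qed.

Lemma hom_subset_add m (P : fam) k x (a a' s : {fset nat}) :
  x \in s -> a `<=` s `\ x -> a' `<=` a ->
  (forall t, t `<=` a -> #|` t| = m -> P (x |` t)) ->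
  Defs.lift k m.+1 P a' -> hom_subset m.+1 P k.+1 s.
Proof.
move=> xs as' a'a Px [ca' Pa'].
have a's' := fsubset_trans a'a as'.
have xa' : x \notin a' by apply/negP => /(fsubsetP a's'); rewrite in_fsetD1 eqxx.
have a's := fsubset_trans a's' (fsubD1set s x).
exists (x |` a'); first by rewrite fsubUset fsub1set xs a's.
split=> [|t ta ct]; first by rewrite cardfsU1 xa' ca'.
have [xt | xt] := boolP (x \in t).
  rewrite -(fsetD1K xt); apply: Px.
    by apply: fsubset_trans a'a; rewrite fsubDset.
  by move: ct; rewrite (cardfsD1 x) xt add1n => -[].
by apply: Pa' => //; rewrite -(mem_fsetD1 xt) fsubDset.
Qed.

Definition ramsey_bound m k l N := forall (P : fam) (s : {fset nat}),
  N <= #|` s| -> hom_subset m P k s \/ hom_subset m (fun t => ~ P t) l s.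

Lemma ramsey_bound0 k l : ramsey_bound 0 k l (maxn k l).
Proof.
have hom_of_empty (Q : fam) j (s : {fset nat}) :
    Q fset0 -> j <= #|` s| -> hom_subset 0 Q j s.
  move=> Q0 /exists_fsubset_card[a a_s ca].
  by exists a => //; split=> // t _ /cardfs0_eq ->.
move=> P s; rewrite geq_max => /andP[ks ls].
by have [P0 | nP0] := classic (P fset0); [left | right]; apply: hom_of_empty.
Qed.

Lemma ramsey_bound_step m k l N0 N1 N2 :
  ramsey_bound m N1 N2 N0 -> ramsey_bound m.+1 k l.+1 N1 ->
  ramsey_bound m.+1 k.+1 l N2 -> ramsey_bound m.+1 k.+1 l.+1 N0.+1.
Proof.
move=> h0 h1 h2 P s hs.
have /fset0Pn[x xs] : s != fset0 by rewrite -cardfs_gt0 (leq_trans _ hs).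
have s's : s `\ x `<=` s := fsubD1set s x.
have /h0 : N0 <= #|` s `\ x| by move: hs; rewrite (cardfsD1 x) xs add1n ltnS.
case/(_ (fun t => P (x |` t))) => [[a as' [ca Pa]] | [a as' [ca Pa]]];
  have a_s := fsubset_trans as' s's.
- have [|[a' a'a ha'] | hQ] := h1 P a; first by rewrite ca.
    by left; apply: hom_subset_add xs as' a'a Pa ha'.
  by right; apply: hom_subset_mono a_s hQ.
- have [|hP | [a' a'a ha']] := h2 P a; first by rewrite ca.
    by left; apply: hom_subset_mono a_s hP.
  by right; apply: hom_subset_add xs as' a'a Pa ha'.
Qed.

Lemma ramsey m k l : exists N, ramsey_bound m k l N.
Proof.
elim: m k l => [|m IHm] k l; first by exists (maxn k l); apply: ramsey_bound0.
elim: k l => [|k IHk] l; first by exists 0 => P s _; left; apply: hom_subset0.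
elim: l => [|l [N2 h2]]; first by exists 0 => P s _; right; apply: hom_subset0.
have [N1 h1] := IHk l.+1; have [N0 h0] := IHm N1 N2.
by exists N0.+1; apply: ramsey_bound_step h0 h1 h2.
Qed.

Lemma uf_meet Y p (A B : fam) :
  ultrafilter_on Y p -> p A -> p B -> exists s, A s /\ B s.
Proof.
move=> [_ [_ p0 pI pU _]] pA pB; apply: NNPP => nAB; apply: p0.
by apply: (pU _ _ (pI _ _ pA pB)) => [s [As Bs] | s []]; apply: nAB; exists s.
Qed.

Lemma uf_thick n p (A : fam) : ultrafilter_on (Ysub n) p ->
  (forall B, inI n B -> p (fdiff (Ysub n) B)) -> p A -> thick n A.
Proof.
move=> p_uf p_thin pA; apply: NNPP => thinA.
have AY : incl A (Ysub n) by case: p_uf => /(_ A pA).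
by have [a [Aa [_ []]]] := uf_meet p_uf pA (p_thin A (conj AY thinA)).
Qed.

Lemma inI_sub_fempty n (A : fam) : incl A fempty -> inI n A.
Proof.
move=> A0; split=> [a /A0 // | th]; have [s [cs As]] := th n (leqnn n).
exact: A0 s (As s (fsubset_refl s) cs).
Qed.

Section Projection.

Variables n m : nat.
Hypothesis le_mn : m <= n.

Lemma lift_sub_Ysub (R : fam) : incl (Defs.lift n m R) (Ysub n).
Proof. by move=> a []. Qed.

Lemma lift_monotone (A B : fam) :
  incl A B -> incl (Defs.lift n m A) (Defs.lift n m B).
Proof. by move=> AB a [ca Aa]; split=> // t ta ct; apply/AB/Aa. Qed.

Lemma lift_finter (A B : fam) a :
  Defs.lift n m A a -> Defs.lift n m B a -> Defs.lift n m (finter A B) a.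
Proof.
by move=> [ca Aa] [_ Ba]; split=> // t ta ct; split; [apply: Aa | apply: Ba].
Qed.

Lemma lift_nonempty (R : fam) a : Defs.lift n m R a -> exists t, R t.
Proof.
move=> [ca Ra]; have [|t ta ct] := @exists_fsubset_card a m; first by rewrite ca.
by exists t; apply: Ra.
Qed.

Lemma thick_lift (R : fam) : thick n (Defs.lift n m R) -> thick m R.
Proof.
move=> thR j le_mj; have [s [cs Rs]] := thR (maxn j n) (leq_maxr _ _).
have [|s' s's cs'] := @exists_fsubset_card s j; first by rewrite cs leq_maxl.
exists s'; split=> // t ts' ct; have ts := fsubset_trans ts' s's.
have [|a [ta a_s ca]] := @exists_fsubset_between t s n ts.
  by rewrite ct le_mn cs leq_maxr.
by case: (Rs a a_s ca) => _; apply.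
Qed.

Lemma thin_lift_undecided (R : fam) :
  inI n (fun a => Ysub n a /\ ~ Defs.lift n m R a /\
                  ~ Defs.lift n m (fdiff (Ysub m) R) a).
Proof.
split=> [a [] // | th]; have [N hN] := ramsey m n n.
have [s [cs Us]] := th (maxn N n) (leq_maxr _ _).
have [|[a a_s Ra] | [a a_s [ca nRa]]] := hN R s; first by rewrite cs leq_maxl.
  by case: (Us a a_s Ra.1) => _ [].
by case: (Us a a_s ca) => _ [_ []]; split=> // t ta ct; split; [apply: ct | apply: nRa].
Qed.

Lemma psi_sub_lift (T R : fam) :
  incl T (Defs.lift n m R) -> incl (psi n m T) (Defs.lift n m R).
Proof.
move=> TR a [ca Ta]; split=> // t ta ct.
have [_ [u [_ /TR [_]]]] := Ta t ta ct; apply=> //; exact: fsubsetUl.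
Qed.

Lemma psi_fempty : psi n m fempty = fempty.
Proof.
apply: functional_extensionality => a; apply: propositional_extensionality.
by split=> // /(lift_nonempty) [t [_ [u []]]].
Qed.

Definition proj_filter (p : fam2) : fam2 :=
  fun R => incl R (Ysub m) /\ p (Defs.lift n m R).

Lemma is_proj_eq p q' :
  ultrafilter_on (Ysub n) p -> is_proj n m p q' -> q' = proj_filter p.
Proof.
move=> p_uf [[[q'Y [_ _ _ _ q'U]] _] q'p].
apply: functional_extensionality => R; apply: propositional_extensionality.
split=> [q'R | [RY pR]]; first by split; [apply: q'Y | apply: q'p].
have [//|q'nR] := q'U R RY.
have [a [Ra nRa]] := uf_meet p_uf pR (q'p _ q'nR).
by have [t [Rt [_ []]]] := lift_nonempty (lift_finter Ra nRa).
Qed.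

Lemma is_pi_proj p q' :
  ultrafilter_on (Ysub n) p -> is_proj n m p q' -> is_pi n m p q'.
Proof.
move=> p_uf pq'; split=> // q'' pq''.
by rewrite (is_proj_eq p_uf pq'') (is_proj_eq p_uf pq').
Qed.

Lemma proj_filter_ultrafilter p : ultrafilter_on (Ysub n) p ->
  (forall A, inI n A -> p (fdiff (Ysub n) A)) ->
  ultrafilter_on (Ysub m) (proj_filter p).
Proof.
move=> p_uf p_thin; have [_ [pY _ pI pU pD]] := p_uf.
split=> [R [] // |]; split.
- by split=> //; apply: (pU _ _ pY _ (@lift_sub_Ysub _)) => a ca; split=> // t _.
- move=> [_ p0]; have [a [/lift_nonempty [t []] _]] := uf_meet p_uf p0 p0.
- move=> A B [AY pA] [_ pB]; split=> [t [/AY] // |].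
  apply: (pU _ _ (pI _ _ pA pB) _ (@lift_sub_Ysub _)).
  by move=> a [Aa Ba]; apply: lift_finter.
- move=> A B [_ pA] AB BY; split=> //.
  by apply: (pU _ _ pA _ (@lift_sub_Ysub _)); apply: lift_monotone.
move=> R RY; have [pR | pnR] := pD _ (@lift_sub_Ysub R); first by left.
have [pR' | pnR'] := pD _ (@lift_sub_Ysub (fdiff (Ysub m) R)).
  by right; split=> // t [].
have [a [[[Ya nRa] [_ nR'a]] [_ nUa]]] :=
  uf_meet p_uf (pI _ _ pnR pnR') (p_thin _ (thin_lift_undecided R)).
by exfalso; apply: nUa.
Qed.

Lemma proj_filter_is_proj p : ultrafilter_on (Ysub n) p ->
  (forall A, inI n A -> p (fdiff (Ysub n) A)) -> is_proj n m p (proj_filter p).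
Proof.
move=> p_uf p_thin; split=> [|R []] //.
split; first exact: proj_filter_ultrafilter.
by move=> R [_ /(uf_thick p_uf p_thin)]; apply: thick_lift.
Qed.

Lemma near_closed_fempty : near_closed n m fempty.
Proof.
by exists fempty; split; [apply: psi_fempty | apply: inI_sub_fempty => a [[]|[]]].
Qed.

Lemma intertwines_mem S p q : incl S (Ysub n) -> ultrafilter_on (Ysub n) p ->
  intertwines n m S p q -> p S.
Proof.
move=> SY [_ [_ _ _ pU _]] [_ pS _ _].
apply: (pU _ _ (pS _ near_closed_fempty _) _ SY) => [|a []] //.
by apply: inI_sub_fempty => a [[]].
Qed.

Lemma proj_filter_intertwines S p q : incl S (Ysub n) ->
  ultrafilter_on (Ysub n) p -> ultrafilter_on (Ysub n) q ->
  intertwines n m S p q -> is_proj n m q (proj_filter p).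
Proof.
move=> SY p_uf [_ [_ _ _ qU _]] pq; have [_ _ psiq thin] := pq.
have p_thin A : inI n A -> p (fdiff (Ysub n) A) by move/thin => [].
split=> [|R [_ pR]]; first exact: (proj_filter_is_proj p_uf p_thin).1.
have [_ [_ _ pI _ _]] := p_uf.
have pSR := pI _ _ (intertwines_mem SY p_uf pq) pR.
have qpsiSR := psiq _ pSR (fun a => @proj1 _ _).
apply: (qU _ _ qpsiSR _ (@lift_sub_Ysub R)) => a [+ _].
by apply: psi_sub_lift => b [].
Qed.

End Projection.

Theorem mainTheorem11 (m n : nat) (S : fam) (p q : fam2) :
  m < n ->
  incl S (Ysub n) ->
  ~ fin_near_closed n m S ->
  ultrafilter_on (Ysub n) p ->
  ultrafilter_on (Ysub n) q ->
  intertwines n m S p q ->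
  exists pi : fam2, is_pi n m p pi /\ is_pi n m q pi.
Proof.
move=> /ltnW le_mn SY _ p_uf q_uf pq; have [_ _ _ thin] := pq.
have p_thin A : inI n A -> p (fdiff (Ysub n) A) by move/thin => [].
exists (proj_filter n m p); split; apply: is_pi_proj => //.
  exact: proj_filter_is_proj.
exact: (proj_filter_intertwines le_mn SY p_uf q_uf pq).
Qed.
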